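(* Let $\mathcal A_+,\mathcal A_-\subseteq\mathbb Z^n$ be disjoint nonempty finite sets, $\mathcal A=\mathcal A_+\cup\mathcal A_-$, such that $\mathcal A_-\subseteq\operatorname{relint}(\Gamma)$ for a face $\Gamma$ of $\operatorname{conv}(\mathcal A_+)$ and $(\mathcal A_+\cap\Gamma,\mathcal A_-\cap\Gamma)$ is nonseparable. Let $f\in\mathcal S(\mathcal A_+,\mathcal A_-)$ have nonsigned coefficients $c\in\mathbb R^{\mathcal A}_{>0}$ and let $h:\mathcal A\to\mathbb Z$ be a height function lifting $\mathcal A_-$. Then the set $S:=\{t\in\mathbb R_{>0}:F^\Gamma(\pi_\Gamma(c\star t^h),x)=0\text{ for some }x\in\mathbb R^n_{>0}\}$ has exactly one element.
   Context: A signomial with signed support $(\mathcal A_+,\mathcal A_-)$ is $f_c(x)=\sum_{a\in\mathcal A_+}c_ax^a-\sum_{b\in\mathcal A_-}c_bx^b$ on $\mathbb R^n_{>0}$, $c\in\mathbb R^{\mathcal A}_{>0}$ (nonsigned coefficients); $\mathcal S(\mathcal A_+,\mathcal A_-)$ is the set of these. For a signed support $(\mathcal B_+,\mathcal B_-)$ the critical system is $F(c,x)=(f_c(x),x_1\partial_{x_1}f_c(x),\dots,x_n\partial_{x_n}f_c(x))$. $\pi_\Gamma:\mathbb R^{\mathcal A}\to\mathbb R^{\mathcal A\cap\Gamma}$ is the coordinate projection and $F^\Gamma$ the critical system of $(\mathcal A_+\cap\Gamma,\mathcal A_-\cap\Gamma)$. A height function $h$ lifts $\mathcal A_-$ if $h(a)>0$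 for $a\in\mathcal A_-$, $h(a)=0$ for $a\in\mathcal A_+$; $c\star t^h=(c_at^{h(a)})_a$. For $(\mathcal B_+,\mathcal B_-)$ of dimension $d=\dim\operatorname{conv}(\mathcal B_+\cup\mathcal B_-)$: $\mathcal F(\mathcal B_+)$ is the common refinement of all regular polyhedral subdivisions of $\mathcal B_+$, $\mathcal F_d(\mathcal B_+)$ its $d$-cells, and $(\mathcal B_+,\mathcal B_-)$ is nonseparable if $\mathcal B_-\subseteq\operatorname{relint}\operatorname{conv}(\mathcal B_+)$ and some $D\in\mathcal F_d(\mathcal B_+)$ contains $\mathcal B_-$. *)

From HB Require Import structures.
From mathcomp Require Import all_boot all_order all_algebra.
From mathcomp Require Import all_classical all_reals all_analysis.
From mathcomp Require Import finmap.

Set Implicit Arguments.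
Unset Strict Implicit.
Unset Printing Implicit Defensive.

Import Order.TTheory GRing.Theory Num.Theory.
Local Open Scope classical_set_scope.
Local Open Scope fset_scope.
Local Open Scope ring_scope.

Section Defs.
Variables (R : realType) (n : nat).

Definition vR (a : 'rV[int]_n) : 'rV[R]_n := map_mx (fun z : int => z%:~R) a.

Definition dotR (w x : 'rV[R]_n) : R := \sum_(i < n) w 0 i * x 0 i.
Definition sqdist (x y : 'rV[R]_n) : R := \sum_(i < n) (x 0 i - y 0 i) ^+ 2.

Definition posvec (x : 'rV[R]_n) : Prop := forall i, 0 < x 0 i.

Definition monom (a : 'rV[int]_n) (x : 'rV[R]_n) : R := \prod_(i < n) x 0 i ^ a 0 i.

(* signomial with signed support (Bp, Bm) and nonsigned coefficients c *)
Definition signomial (Bp Bm : {fset 'rV[int]_n}) (c : 'rV[int]_n -> R)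
  (x : 'rV[R]_n) : R :=
  \sum_(a <- Bp) c a * monom a x - \sum_(b <- Bm) c b * monom b x.

(* the critical system F(c,x) = (f_c(x), x_1 d_1 f_c(x), ..., x_n d_n f_c(x)),
   indexed by 'I_n.+1: index 0 is f_c, index i.+1 is x_i d_{x_i} f_c *)
Definition crit_system (Bp Bm : {fset 'rV[int]_n}) (c : 'rV[int]_n -> R)
  (x : 'rV[R]_n) : 'I_n.+1 -> R :=
  fun k => match unlift ord0 k with
           | None => signomial Bp Bm c x
           | Some i => x 0 i * derive (signomial Bp Bm c) x (delta_mx 0 i)
           end.

Definition cvx_hull (B : {fset 'rV[int]_n}) : set 'rV[R]_n :=
  [set x | exists l : 'rV[int]_n -> R,
     (forall b, b \in B -> 0 <= l b) /\ \sum_(b <- B) l b = 1 /\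
     x = \sum_(b <- B) l b *: vR b].

Definition is_face_of (P G : set 'rV[R]_n) : Prop :=
  exists w : 'rV[R]_n, G = [set x | P x /\ forall y, P y -> dotR w y <= dotR w x].

Definition aff_hull (S : set 'rV[R]_n) : set 'rV[R]_n :=
  [set x | exists (k : nat) (p : 'I_k -> 'rV[R]_n) (l : 'I_k -> R),
     (forall i, S (p i)) /\ \sum_(i < k) l i = 1 /\ x = \sum_(i < k) l i *: p i].

Definition rel_int (S : set 'rV[R]_n) : set 'rV[R]_n :=
  [set x | S x /\ exists e : R, 0 < e /\
     forall y, aff_hull S y -> sqdist y x < e ^+ 2 -> S y].

Definition aff_indep (k : nat) (p : 'I_k.+1 -> 'rV[R]_n) : bool :=
  row_free (\matrix_(i < k) (p (lift ord0 i) - p ord0)).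

Definition has_aff_indep (S : set 'rV[R]_n) (k : nat) : Prop :=
  exists p : 'I_k.+1 -> 'rV[R]_n, (forall i, S (p i)) /\ aff_indep p.

Definition dim_is (S : set 'rV[R]_n) (d : nat) : Prop :=
  has_aff_indep S d /\ ~ has_aff_indep S d.+1.

(* cells (of all dimensions) of the regular polyhedral subdivision of B induced
   by the height function om : lower faces of the lifted configuration,
   i.e. cvx_hull of the points minimizing om(b) - <w,b> for some w *)
Definition reg_cell (B : {fset 'rV[int]_n}) (om : 'rV[int]_n -> R)
  (C : set 'rV[R]_n) : Prop :=
  exists w : 'rV[R]_n,
    C = cvx_hull [fset b in B | `[< forall b', b' \in B ->
                   om b - dotR w (vR b) <= om b' - dotR w (vR b') >]].

(* cells of the common refinement F(B) of all regular polyhedral subdivisions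
   of B: nonempty intersections of one cell from each regular subdivision *)
Definition refin_cell (B : {fset 'rV[int]_n}) (D : set 'rV[R]_n) : Prop :=
  exists sigma : ('rV[int]_n -> R) -> set 'rV[R]_n,
    (forall om, reg_cell B om (sigma om)) /\
    D = [set x | forall om, sigma om x] /\ D !=set0.

Definition nonseparable (Bp Bm : {fset 'rV[int]_n}) : Prop :=
  (forall b, b \in Bm -> rel_int (cvx_hull Bp) (vR b)) /\
  exists d : nat, dim_is (cvx_hull (fsetU Bp Bm)) d /\
    exists D, refin_cell Bp D /\ dim_is D d /\ (forall b, b \in Bm -> D (vR b)).

Definition restr_supp (A : {fset 'rV[int]_n}) (G : set 'rV[R]_n) : {fset 'rV[int]_n} :=
  [fset a in A | `[< G (vR a) >]].

Definition lifts_neg (Ap Am : {fset 'rV[int]_n}) (h : 'rV[int]_n -> int) : Prop :=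
  (forall a, a \in Am -> 0 < h a) /\ (forall a, a \in Ap -> h a = 0).

Definition coef_star (c : 'rV[int]_n -> R) (t : R) (h : 'rV[int]_n -> int) :
  'rV[int]_n -> R := fun a => c a * t ^ h a.

Definition coef_proj (A : {fset 'rV[int]_n}) (c : 'rV[int]_n -> R) : 'rV[int]_n -> R :=
  fun a => if a \in A then c a else 0.

End Defs.

Arguments vR {R n} a.
Arguments cvx_hull {R n} B _.

(* Write the coefficients as [c] on the positive support [P] and [c b * t ^ h b]
   on the negative support [N].  In logarithmic coordinates [x = exp z] the
   signomial is [fpos z * (1 - psi t z)], where
   [psi t z = sum_b t ^ h b * c b * exp <b, z> / fpos z] is increasing in [t].

   Uniqueness: a positive critical zero [x2] at [t2] yields weights on [P] and
   [N] with equal masses and equal first moments.  Since [N] lies in one cell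
   of every regular subdivision of [P], Jensen's inequality on that cell shows
   that the positive part then dominates the negative part at every point, in
   particular at a critical zero [x1] for a parameter [t1 < t2], where the
   negative coefficients are strictly smaller: contradiction.

   Existence: as [N] lies in the relative interior of [conv P], [psi t z] decays
   exponentially with the spread of [<a, z>] over [P]; hence [sup_z psi t z] is
   attained on a fixed compact box, is continuous in [t], is small for small [t]
   and exceeds 1 for large [t].  At a [t0] where it equals 1 the signomial is
   nonnegative and vanishes at the maximiser, which is therefore critical. *)

From HB Require Import structures.
From mathcomp Require Import all_boot all_order all_algebra.
From mathcomp Require Import all_classical all_reals all_analysis.
From mathcomp Require Import finmap.
From mathcomp Require Import ring lra.
Import Order.TTheory GRing.Theory Num.Theory numFieldNormedType.Exports.
Set Implicit Arguments.
Unset Strict Implicit.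
Unset Printing Implicit Defensive.
Local Open Scope classical_set_scope.
Local Open Scope ring_scope.

Section FiniteFamilies.
Variable R : realType.

Lemma fset_argmax (T : choiceType) (P : {fset T}) (u : T -> R) : P != fset0 ->
  exists2 a, a \in P & forall a', a' \in P -> u a' <= u a.
Proof.
case/fset0Pn => a0 a0P.
have [a _ amax] := @arg_maxP _ _ _ [` a0P]%fset xpredT (u \o val) isT.
by exists (val a) => [|a' a'P]; [exact: valP | exact: (amax [` a'P]%fset)].
Qed.

Lemma seq_uniform_pos (T : eqType) (s : seq T) (Q : T -> R -> Prop) :
  (forall b e e', 0 < e' -> e' <= e -> Q b e -> Q b e') ->
  (forall b, b \in s -> exists2 e, 0 < e & Q b e) ->
  exists2 e, 0 < e & forall b, b \in s -> Q b e.
Proof.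
move=> Qmono; elim: s => [|x s IH] Qpos; first by exists 1.
have [e1 e1_gt0 Qe1] := Qpos x (mem_head _ _).
have [e2 e2_gt0 Qe2] : exists2 e, 0 < e & forall b, b \in s -> Q b e.
  by apply: IH => b bs; apply: Qpos; rewrite inE bs orbT.
have emin_gt0 : 0 < Num.min e1 e2 by rewrite lt_min e1_gt0.
exists (Num.min e1 e2) => // b; rewrite inE => /orP[/eqP -> | bs].
  by apply: Qmono Qe1; rewrite ?ge_min ?lexx.
by apply: Qmono (Qe2 b bs); rewrite ?ge_min ?lexx ?orbT.
Qed.

Lemma ler_sum_term (T : choiceType) (P : {fset T}) (F : T -> R) a :
  (forall b, b \in P -> 0 <= F b) -> a \in P -> F a <= \sum_(b <- P) F b.
Proof.
move=> F_ge0 aP; rewrite (big_fsetD1 a aP) /= lerDl big_seq.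
by apply: sumr_ge0 => b; rewrite !inE => /andP[_ /F_ge0].
Qed.

Lemma convex_comb_le (T : eqType) (s : seq T) (l u : T -> R) (M : R) :
  (forall a, a \in s -> 0 <= l a) -> \sum_(a <- s) l a = 1 ->
  (forall a, a \in s -> u a <= M) -> \sum_(a <- s) l a * u a <= M.
Proof.
move=> l_ge0 l_sum1 uM; rewrite -[M]mul1r -l_sum1 mulr_suml.
rewrite big_seq [X in _ <= X]big_seq; apply: ler_sum => a aS.
by apply: ler_wpM2l; [exact: l_ge0 | exact: uM].
Qed.

(* Tangent line at the barycentre: [expR (mu + d) >= expR mu * (1 + d)]. *)
Lemma jensen_expR (T : eqType) (s : seq T) (l y : T -> R) :
  (forall i, i \in s -> 0 <= l i) -> \sum_(i <- s) l i = 1 ->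
  expR (\sum_(i <- s) l i * y i) <= \sum_(i <- s) l i * expR (y i).
Proof.
move=> l_ge0 l_sum1; set mu := \sum_(i <- s) l i * y i.
have tangent i : expR mu * (1 + (y i - mu)) <= expR (y i).
  by have := expR_ge1Dx (y i - mu); rewrite -(ler_pM2l (expR_gt0 mu)) -expRD subrKC.
have -> : expR mu = \sum_(i <- s) l i * (expR mu * (1 + (y i - mu))).
  transitivity (expR mu * (\sum_(i <- s) l i + (mu - mu * \sum_(i <- s) l i))).
    by rewrite l_sum1 mulr1 subrr addr0 mulr1.
  rewrite mulr_sumr -sumrB -big_split /= mulr_sumr.
  by apply: eq_bigr => i _; ring.
rewrite big_seq [X in _ <= X]big_seq; apply: ler_sum => i si.
by apply: ler_wpM2l; [exact: l_ge0 | exact: tangent].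
Qed.

Lemma sum_continuous (T : topologicalType) (I : Type) (s : seq I)
    (F : I -> T -> R) :
  (forall i, continuous (F i)) -> continuous (fun q => \sum_(i <- s) F i q).
Proof.
move=> F_cont; elim: s => [|u s IH].
  have -> : (fun q : T => \sum_(i <- [::]) F i q) = fun=> 0.
    by apply/funext => q; rewrite big_nil.
  exact: cst_continuous.
have -> : (fun q : T => \sum_(i <- u :: s) F i q) = F u + (fun q => \sum_(i <- s) F i q).
  by apply/funext => q; rewrite big_cons.
by move=> x; apply: continuousD; [exact: F_cont | exact: IH].
Qed.

End FiniteFamilies.

Section ExponentialCoordinates.
Variables (R : realType) (n : nat).
Implicit Types (a b : 'rV[int]_n) (w x y z : 'rV[R]_n).

Lemma vRE a j : vR a 0 j = (a 0 j)%:~R :> R.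
Proof. by rewrite mxE. Qed.

Lemma dotRDr w x y : dotR w (x + y) = dotR w x + dotR w y.
Proof. by rewrite /dotR -big_split; apply: eq_bigr => i _; rewrite mxE mulrDr. Qed.

Lemma dotRBr w x y : dotR w (x - y) = dotR w x - dotR w y.
Proof. by rewrite /dotR -sumrB; apply: eq_bigr => i _; rewrite !mxE mulrBr. Qed.

Lemma dotRZr w k x : dotR w (k *: x) = k * dotR w x.
Proof. by rewrite /dotR mulr_sumr; apply: eq_bigr => i _; rewrite mxE mulrCA. Qed.

Lemma dotRC w x : dotR w x = dotR x w.
Proof. by apply: eq_bigr => i _; rewrite mulrC. Qed.

Lemma dotR0r w : dotR w 0 = 0.
Proof. by rewrite /dotR big1 // => i _; rewrite mxE mulr0. Qed.

Lemma dotR_sumr (T : Type) (s : seq T) (F : T -> 'rV[R]_n) w :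
  dotR w (\sum_(i <- s) F i) = \sum_(i <- s) dotR w (F i).
Proof.
elim: s => [|u s IH]; first by rewrite !big_nil dotR0r.
by rewrite !big_cons dotRDr IH.
Qed.

Definition lnv x : 'rV[R]_n := \row_j ln (x 0 j).
Definition expv z : 'rV[R]_n := \row_j expR (z 0 j).

Lemma expv_pos z : posvec (expv z).
Proof. by move=> i; rewrite mxE expR_gt0. Qed.

Lemma lnvK x : posvec x -> expv (lnv x) = x.
Proof. by move=> x_pos; apply/rowP => j; rewrite !mxE lnK // posrE. Qed.

Lemma expvK z : lnv (expv z) = z.
Proof. by apply/rowP => j; rewrite !mxE expRK. Qed.

Lemma expR_mulz_ln (y : R) (k : int) : 0 < y -> expR (k%:~R * ln y) = y ^ k.
Proof.
move=> y_gt0; case: k => m; first by rewrite expRM_natl lnK ?posrE.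
by rewrite NegzE mulrNz mulNr expRN expRM_natl lnK ?posrE.
Qed.

Lemma monom_exp a x : posvec x -> monom a x = expR (dotR (vR a) (lnv x)).
Proof.
move=> x_pos; rewrite /monom /dotR expR_sum; apply: eq_bigr => i _.
by rewrite vRE mxE expR_mulz_ln.
Qed.

Lemma monom_expv a z : monom a (expv z) = expR (dotR (vR a) z).
Proof. by rewrite monom_exp ?expvK //; exact: expv_pos. Qed.

Lemma monom_gt0 a x : posvec x -> 0 < monom a x.
Proof. by move=> x_pos; rewrite monom_exp // expR_gt0. Qed.

Lemma signomial_expv (P N : {fset 'rV[int]_n}) (c : 'rV[int]_n -> R) z :
  signomial P N c (expv z) =
  \sum_(a <- P) c a * expR (dotR (vR a) z) - \sum_(b <- N) c b * expR (dotR (vR b) z).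
Proof.
by congr (_ - _); apply: eq_bigr => a _; rewrite monom_expv.
Qed.

End ExponentialCoordinates.

Section HullGeometry.
Variables (R : realType) (n : nat).
Local Open Scope fset_scope.
Local Open Scope ring_scope.
Implicit Types (P : {fset 'rV[int]_n}) (a b : 'rV[int]_n) (w x y z : 'rV[R]_n).

Lemma cvx_hull_fset0 x : ~ cvx_hull (fset0 : {fset 'rV[int]_n}) x.
Proof. by case=> l [_ [+ _]]; rewrite big_seq_fset0 => /esym/eqP; rewrite oner_eq0. Qed.

Lemma cvx_hull_dotR P x : cvx_hull P x ->
  exists2 l : 'rV[int]_n -> R, (forall a, a \in P -> 0 <= l a) /\ \sum_(a <- P) l a = 1 &
    forall w, dotR w x = \sum_(a <- P) l a * dotR w (vR a).
Proof.
case=> l [l_ge0 [l_sum1 ->]]; exists l => // w.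
by rewrite dotR_sumr; apply: eq_bigr => a _; rewrite dotRZr.
Qed.

Lemma vR_in_cvx_hull P a : a \in P -> @cvx_hull R n P (vR a).
Proof.
move=> aP; exists (fun a' => (a' == a)%:R); split=> [b _|]; first by rewrite ler0n.
have others b : b \in P `\ a -> (b == a)%:R = 0 :> R.
  by rewrite !inE => /andP[/negbTE -> _].
split; rewrite (big_fsetD1 a aP) /= eqxx big_seq big1 ?addr0 ?scale1r //.
by move=> b /others ->; rewrite scale0r.
Qed.

Lemma cvx_hull_dotR_le P y z (M : R) : cvx_hull P y ->
  (forall a, a \in P -> dotR (vR a) z <= M) -> dotR z y <= M.
Proof.
case/cvx_hull_dotR => l [l_ge0 l_sum1] -> zM.
by apply: (convex_comb_le l_ge0 l_sum1) => a aP; rewrite dotRC; exact: zM.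
Qed.

Lemma sqdist_ge0 x y : 0 <= sqdist x y.
Proof. by apply: sumr_ge0 => i _; exact: sqr_ge0. Qed.

Lemma sqdist_shift x y y' (k : R) : sqdist (x + k *: (y - y')) x = k ^+ 2 * sqdist y y'.
Proof. by rewrite /sqdist mulr_sumr; apply: eq_bigr => i _; rewrite !mxE; ring. Qed.

(* Moving from a relative interior point [b] in the direction [a1 - a2] of the
   affine hull by a uniformly small step stays inside the hull, so a linear
   form bounded by [M] on [P] still is at the displaced point. *)
Lemma rel_int_margin P b : rel_int (@cvx_hull R n P) (vR b) ->
  exists2 eps : R, 0 < eps & forall z a1 a2 (M : R), a1 \in P -> a2 \in P ->
    (forall a, a \in P -> dotR (vR a) z <= M) ->
    dotR (vR b) z + eps * (dotR (vR a1) z - dotR (vR a2) z) <= M.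
Proof.
case=> b_hull [e [e_gt0 e_ball]].
pose diam := \sum_(a1 <- P) \sum_(a2 <- P) sqdist (vR a1 : 'rV[R]_n) (vR a2).
have diam_ge0 : 0 <= diam.
  by apply: sumr_ge0 => a _; apply: sumr_ge0 => a' _; exact: sqdist_ge0.
have sqdist_le a1 a2 : a1 \in P -> a2 \in P -> sqdist (vR a1 : 'rV[R]_n) (vR a2) <= diam.
  move=> a1P a2P; apply: le_trans (ler_sum_term _ a1P); last first.
    by move=> a _; apply: sumr_ge0 => ? _; exact: sqdist_ge0.
  by apply: (ler_sum_term (F := fun a => sqdist _ (vR a))) => // ? _; exact: sqdist_ge0.
pose eps := e / (1 + diam).
have eps_gt0 : 0 < eps by rewrite divr_gt0 // ltr_pwDl.
exists eps => // z a1 a2 M a1P a2P zM.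
pose y := vR b + eps *: (vR a1 - vR a2) : 'rV[R]_n.
have y_hull : cvx_hull P y.
  apply: e_ball.
    exists 3, (fun i : 'I_3 => match val i with 0 => vR b | 1 => vR a1 | _ => vR a2 end),
              (fun i : 'I_3 => match val i with 0 => 1 | 1 => eps | _ => - eps end).
    split; first by case=> -[|[|[|]]] //= _; exact: vR_in_cvx_hull.
    split; first by rewrite !big_ord_recl big_ord0 /=; ring.
    by rewrite !big_ord_recl big_ord0 /= /y scale1r addr0 scalerBr scaleNr addrA.
  rewrite sqdist_shift.
  have := sqdist_le a1 a2 a1P a2P; have := sqdist_ge0 (vR a1) (vR a2).
  have -> : e = eps * (1 + diam) by rewrite divfK // gt_eqF // ltr_pwDl.
  move: (sqdist _ _) => d d_ge0 d_le; nra.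
have -> : dotR (vR b) z + eps * (dotR (vR a1) z - dotR (vR a2) z) = dotR z y.
  by rewrite dotRDr dotRZr dotRBr !(dotRC z).
exact: cvx_hull_dotR_le y_hull zM.
Qed.

(* [z] only matters through the differences [<a - a0, z>], which are linear in
   [z]; a pseudo-inverse of that linear map picks a representative whose size is
   controlled by the differences. *)
Lemma bounded_representative P a0 (K : R) : a0 \in P -> 0 <= K ->
  exists2 B : R, 0 <= B & forall z,
    (forall a, a \in P -> `|dotR (vR a) z - dotR (vR a0) z| <= K) ->
    exists2 z' : 'rV[R]_n, (forall j, `|z' 0 j| <= B) &
      forall a, a \in P -> dotR (vR a) z' - dotR (vR a0) z' = dotR (vR a) z - dotR (vR a0) z.
Proof.
move=> a0P K_ge0; pose s : seq 'rV[int]_n := P; pose m := size s.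
pose A : 'M[R]_(n, m) := \matrix_(j, k) (vR (nth a0 s k) 0 j - vR a0 0 j).
pose Pv := pinvmx A.
exists (K * \sum_(k < m) \sum_(j < n) `|Pv k j|).
  by apply: mulr_ge0 => //; apply: sumr_ge0 => k _; apply: sumr_ge0.
move=> z zK; pose z' := z *m A *m Pv.
have z'A : z' *m A = z *m A := mulmxKpV (submxMl z A).
have colE (w : 'rV[R]_n) k : (w *m A) 0 k = dotR (vR (nth a0 s k)) w - dotR (vR a0) w.
  by rewrite mxE /dotR -sumrB; apply: eq_bigr => j _; rewrite !mxE; ring.
exists z' => [j | a aP].
  rewrite mxE; apply: le_trans (ler_norm_sum _ _ _) _.
  rewrite mulr_sumr; apply: ler_sum => k _; rewrite normrM.
  have zAK : `|(z *m A) 0 k| <= K by rewrite colE zK // mem_nth.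
  apply: le_trans (ler_wpM2r (normr_ge0 _) zAK) _.
  by rewrite ler_wpM2l // (bigD1 j) //= lerDl sumr_ge0.
have ak : (index a s < m)%N by rewrite index_mem.
have := congr1 (fun M : 'rV[R]_m => M 0 (Ordinal ak)) z'A.
by rewrite /= !colE nth_index.
Qed.

End HullGeometry.

Section Derivatives.
Variables (R : realType) (n : nat).
Implicit Types (a b : 'rV[int]_n) (x : 'rV[R]_n).

Lemma shift_line (f : 'rV[R]_n -> R) x v (t : R) :
  (fun h : R => h^-1 *: ((f \o shift (t *: v + x)) (h *: v) - f (t *: v + x))) =
  (fun h : R => h^-1 *: (((fun s : R => f (s *: v + x)) \o shift t) (h *: (1 : R)) -
                         f (t *: v + x))).
Proof.
apply/funext => h /=; congr (_ *: (f _ - _)).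
by rewrite /shift /= [h *: (1 : R)]mulr1 scalerDl addrA.
Qed.

Lemma derivable_line (f : 'rV[R]_n -> R) x v (t : R) :
  derivable f (t *: v + x) v <-> derivable (fun s : R => f (s *: v + x)) t 1.
Proof. by rewrite /derivable shift_line. Qed.

Lemma derive_line (f : 'rV[R]_n -> R) x v (t : R) :
  derive f (t *: v + x) v = derive (fun s : R => f (s *: v + x)) t 1.
Proof. by rewrite /derive shift_line. Qed.

Lemma is_derive_line (f : 'rV[R]_n -> R) x (v : 'rV[R]_n) (d : R) :
  is_derive (0 : R) (1 : R) (fun s : R => f (s *: v + x)) d -> is_derive x v f d.
Proof.
move=> [fd fd_d]; have x0 : x = 0 *: v + x by rewrite scale0r add0r.
by split; rewrite x0 ?derivable_line ?derive_line.
Qed.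

Lemma is_derive_powz_shift (y : R) (k : int) : 0 < y ->
  is_derive (0 : R) (1 : R) (fun h : R => (y + h) ^ k) (k%:~R * y ^ k / y).
Proof.
move=> y_gt0; have yN0 : y != 0 by rewrite gt_eqF.
have shift_y : is_derive (0 : R) 1 (shift y) 1 := is_derive_shift 0 1 y.
have powE m : (fun h : R => (y + h) ^+ m) = shift y ^+ m.
  by apply/funext => h; rewrite exprfctE /shift /= addrC.
case: k => m.
  rewrite [_ ^ _]/= powE; apply: is_derive_eq.
  rewrite /shift /= add0r; change (m%:R * y ^+ m.-1 * 1 = m%:R * y ^+ m / y).
  by rewrite mulr1; case: m => [|m]; rewrite ?mul0r //= exprSr mulrA mulfK.
have powN0 : (shift y ^+ m.+1) 0 != 0 by rewrite exprfctE /shift /= add0r expf_neq0.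
have -> : (fun h : R => (y + h) ^ Negz m) = (fun h => ((shift y ^+ m.+1) h)^-1).
  by apply/funext => h; rewrite exprfctE /shift /= addrC.
apply: is_derive_eq (is_deriveV powN0 (is_deriveX m.+1 shift_y)) _.
rewrite exprfctE /shift /= add0r NegzE.
change (- (y ^+ m.+1 * y ^+ m.+1)^-1 * ((m.+1)%:R * y ^+ m * 1)
  = - (m.+1)%:R * (y ^+ m.+1)^-1 / y).
rewrite (exprS y m); move: (y ^+ m) (expf_neq0 m yN0) ((m.+1)%:R) => Y YN0 k.
by field; rewrite YN0 yN0.
Qed.

Lemma is_derive_monom a x i : posvec x ->
  is_derive x (delta_mx 0 i) (monom a) ((a 0 i)%:~R * monom a x / x 0 i).
Proof.
move=> x_pos; apply: is_derive_line.
set M := \prod_(j < n | j != i) x 0 j ^ a 0 j.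
have lineE : (fun h : R => monom a (h *: delta_mx 0 i + x)) =
             M \*: (fun h : R => (x 0 i + h) ^ a 0 i).
  apply/funext => h; rewrite /monom (bigD1 i) //= mulrC; congr (_ * _).
    by apply: eq_bigr => j ji; rewrite !mxE eqxx /= (negbTE ji) mulr0 add0r.
  by rewrite !mxE !eqxx /= mulr1 addrC.
have monomE : monom a x = M * x 0 i ^ a 0 i.
  by have := congr1 (fun f => f 0) lineE; rewrite /= scale0r add0r addr0.
rewrite lineE monomE; apply: is_derive_eq (is_deriveZ M (is_derive_powz_shift _ _)) _.
  exact: x_pos.
by rewrite -[LHS]/(M * ((a 0 i)%:~R * x 0 i ^ a 0 i / x 0 i)); ring.
Qed.

Lemma is_derive_sum_seq (T : Type) (s : seq T) (F : T -> 'rV[R]_n -> R) (dF : T -> R)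
    x (v : 'rV[R]_n) :
  (forall u, is_derive x v (F u) (dF u)) ->
  is_derive x v (fun y => \sum_(u <- s) F u y) (\sum_(u <- s) dF u).
Proof.
move=> FdF; elim: s => [|u s IH].
  have -> : (fun y => \sum_(u <- [::]) F u y) = cst 0.
    by apply/funext => y; rewrite big_nil.
  rewrite big_nil; exact: is_derive_cst.
rewrite big_cons.
have -> : (fun y => \sum_(u0 <- u :: s) F u0 y) = F u + (fun y => \sum_(u0 <- s) F u0 y).
  by apply/funext => y; rewrite big_cons.
exact: is_deriveD.
Qed.

Definition euler_sum (Q : {fset 'rV[int]_n}) (C : 'rV[int]_n -> R) x (i : 'I_n) :=
  \sum_(a <- Q) C a * ((a 0 i)%:~R * monom a x).

Lemma is_derive_signomial (P N : {fset 'rV[int]_n}) (C : 'rV[int]_n -> R) x i :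
  posvec x -> is_derive x (delta_mx 0 i) (signomial P N C)
                (euler_sum P C x i / x 0 i - euler_sum N C x i / x 0 i).
Proof.
move=> x_pos.
have dsum (Q : {fset 'rV[int]_n}) : is_derive x (delta_mx 0 i)
    (fun y => \sum_(a <- Q) C a * monom a y) (euler_sum Q C x i / x 0 i).
  rewrite /euler_sum mulr_suml; apply: is_derive_sum_seq => a.
  apply: is_derive_eq (is_deriveZ (C a) (is_derive_monom a i x_pos)) _.
  by rewrite -[LHS]/(C a * _); ring.
exact: is_deriveB.
Qed.

Lemma crit_system_lift (P N : {fset 'rV[int]_n}) (C : 'rV[int]_n -> R) x i :
  posvec x ->
  crit_system P N C x (lift ord0 i) = euler_sum P C x i - euler_sum N C x i.
Proof.
move=> x_pos; have dsig := is_derive_signomial P N C i x_pos.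
rewrite /crit_system liftK derive_val.
by field; rewrite gt_eqF.
Qed.

Lemma crit_system_moments (P N : {fset 'rV[int]_n}) (C : 'rV[int]_n -> R) x :
  posvec x -> crit_system P N C x = (fun _ => 0) ->
  \sum_(a <- P) C a * monom a x = \sum_(b <- N) C b * monom b x /\
  forall i, euler_sum P C x i = euler_sum N C x i.
Proof.
move=> x_pos crit0; split.
  have := congr1 (fun f => f ord0) crit0; rewrite /crit_system unlift_none.
  by move/eqP; rewrite subr_eq0 => /eqP.
move=> i; have := congr1 (fun f => f (lift ord0 i)) crit0.
by rewrite /= crit_system_lift // => /eqP; rewrite subr_eq0 => /eqP.
Qed.

Lemma crit_system_at_zero_min (P N : {fset 'rV[int]_n}) (C : 'rV[int]_n -> R) x :
  posvec x -> signomial P N C x = 0 ->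
  (forall y, posvec y -> 0 <= signomial P N C y) ->
  crit_system P N C x = (fun _ => 0).
Proof.
move=> x_pos f0 f_ge0; apply/funext => k; rewrite /crit_system.
case: (unliftP ord0 k) => [i _|_] //.
pose phi s := signomial P N C (s *: delta_mx 0 i + x).
have line_pos s : s \in `]- x 0 i, x 0 i[ -> posvec (s *: delta_mx 0 i + x).
  rewrite in_itv /= => /andP[s_gt s_lt] j; rewrite !mxE.
  have [<-|ij] := eqVneq i j; first by rewrite eqxx mulr1; lra.
  by rewrite andbF mulr0 add0r.
have xi_gt0 := x_pos i.
have dphi0 : is_derive (0 : R) (1 : R) phi 0.
  apply: (@derive1_at_min R phi (- x 0 i) (x 0 i)); first lra.
  - move=> s /line_pos s_pos; apply/derivable_line.
    have ds := is_derive_signomial P N C i s_pos; exact: ex_derive.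
  - by rewrite in_itv /=; apply/andP; split; lra.
  - by move=> s /line_pos s_pos; rewrite /phi scale0r add0r f0 f_ge0.
have := derive_line (signomial P N C) x (delta_mx 0 i) 0.
by rewrite scale0r add0r => ->; rewrite derive_val mulr0.
Qed.

End Derivatives.

Section Uniqueness.
Variables (R : realType) (n : nat).
Local Open Scope fset_scope.
Local Open Scope ring_scope.
Implicit Types (P N Q : {fset 'rV[int]_n}) (a b : 'rV[int]_n) (w x z : 'rV[R]_n).

Definition lower_set P (om : 'rV[int]_n -> R) w : {fset 'rV[int]_n} :=
  [fset a in P | `[< forall a', a' \in P ->
                       om a - dotR w (vR a) <= om a' - dotR w (vR a') >]].

Definition in_all_lower_cells P N :=
  forall om : 'rV[int]_n -> R, exists w : 'rV[R]_n,
    forall b, b \in N -> @cvx_hull R n (lower_set P om w) (vR b).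

Lemma nonseparable_lower_cells P N :
  nonseparable R P N -> in_all_lower_cells P N.
Proof.
case=> _ [_ [_ [D [[sigma [sigma_cell [-> _]]] [_ DN]]]]] om.
have [w sigmaE] := sigma_cell om; exists w => b /DN /(_ om).
by rewrite sigmaE.
Qed.

Lemma lower_set_minorant P om w : lower_set P om w != fset0 ->
  exists al : R, (forall a, a \in P -> al + dotR w (vR a) <= om a) /\
                 (forall s, s \in lower_set P om w -> om s = al + dotR w (vR s)).
Proof.
have lowerP s : s \in lower_set P om w -> s \in P /\ forall a, a \in P ->
    om s - dotR w (vR s) <= om a - dotR w (vR a).
  by rewrite !inE /= => /andP[sP /asboolP].
case/fset0Pn => s0 /lowerP [s0P s0min].
exists (om s0 - dotR w (vR s0)); split=> [a /s0min | s /lowerP [sP smin]]; first lra.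
by have := smin s0 s0P; have := s0min s sP; lra.
Qed.

(* Jensen's inequality along the cell containing [b], compared with the affine
   function interpolating [expR <., z>] on that cell. *)
Lemma exp_moment_le P N (wt : 'rV[int]_n -> R) :
  (forall a, a \in P -> 0 <= wt a) -> (forall b, b \in N -> 0 <= wt b) ->
  \sum_(a <- P) wt a = \sum_(b <- N) wt b ->
  (forall u, \sum_(a <- P) wt a * dotR u (vR a) = \sum_(b <- N) wt b * dotR u (vR b)) ->
  in_all_lower_cells P N ->
  forall z, \sum_(b <- N) wt b * expR (dotR (vR b) z)
         <= \sum_(a <- P) wt a * expR (dotR (vR a) z).
Proof.
move=> wtP wtN mass moment cells z.
pose om a := expR (dotR (vR a) z).
have [w cellN] := cells om.
have [-> | /fset0Pn [b0 b0N]] := eqVneq N fset0.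
  rewrite big_seq_fset0 big_seq; apply: sumr_ge0 => a aP.
  by rewrite mulr_ge0 ?wtP ?expR_ge0.
have [al [minor interp]] : exists al : R,
    (forall a, a \in P -> al + dotR w (vR a) <= om a) /\
    (forall s, s \in lower_set P om w -> om s = al + dotR w (vR s)).
  apply: lower_set_minorant; apply/negP => /eqP S0.
  by have := cellN b0 b0N; rewrite S0 => /cvx_hull_fset0.
have jensen b : b \in N -> om b <= al + dotR w (vR b).
  move=> /cellN; case/cvx_hull_dotR => l [l_ge0 l_sum1] lin.
  rewrite /om dotRC lin; under eq_bigr => s _ do rewrite dotRC.
  apply: le_trans (jensen_expR (fun s => dotR (vR s) z) l_ge0 l_sum1) _.
  rewrite lin -[al]mulr1 -l_sum1 mulr_sumr -big_split /=.
  rewrite big_seq [X in _ <= X]big_seq; apply: ler_sum => s sS.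
  by rewrite [al * _]mulrC -mulrDr -(interp s sS).
have affine_sum (Q : {fset 'rV[int]_n}) : \sum_(a <- Q) wt a * (al + dotR w (vR a)) =
    al * \sum_(a <- Q) wt a + \sum_(a <- Q) wt a * dotR w (vR a).
  by rewrite mulr_sumr -big_split; apply: eq_bigr => a _ /=; ring.
apply: (@le_trans _ _ (\sum_(b <- N) wt b * (al + dotR w (vR b)))).
  rewrite big_seq [X in _ <= X]big_seq; apply: ler_sum => b bN.
  by rewrite ler_wpM2l ?wtN ?jensen.
rewrite affine_sum -mass -moment -affine_sum.
rewrite big_seq [X in _ <= X]big_seq; apply: ler_sum => a aP.
by rewrite ler_wpM2l ?wtP ?minor.
Qed.

Lemma euler_sum_dotR Q (C : 'rV[int]_n -> R) x (u : 'rV[R]_n) :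
  \sum_(a <- Q) C a * monom a x * dotR u (vR a) = \sum_(i < n) u 0 i * euler_sum Q C x i.
Proof.
under eq_bigr => a _ do rewrite /dotR mulr_sumr.
rewrite exchange_big; apply: eq_bigr => i _; rewrite /euler_sum mulr_sumr.
by apply: eq_bigr => a _; rewrite vRE; ring.
Qed.

Lemma monom_lnv_shift a x1 x2 : posvec x1 -> posvec x2 ->
  monom a x2 * expR (dotR (vR a) (lnv x1 - lnv x2)) = monom a x1.
Proof.
by move=> x1_pos x2_pos; rewrite !monom_exp // -expRD dotRBr subrKC.
Qed.

Lemma crit_zeros_coef_lt P N (C1 C2 : 'rV[int]_n -> R) x1 x2 :
  N != fset0 ->
  (forall a, a \in P -> 0 < C2 a) -> (forall b, b \in N -> 0 < C1 b) ->
  (forall a, a \in P -> C1 a = C2 a) -> (forall b, b \in N -> C1 b < C2 b) ->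
  in_all_lower_cells P N ->
  posvec x1 -> crit_system P N C1 x1 = (fun _ => 0) ->
  posvec x2 -> crit_system P N C2 x2 = (fun _ => 0) -> False.
Proof.
move=> N0 C2P C1N C12P C12N cells x1_pos crit1 x2_pos crit2.
have [mass1 _] := crit_system_moments x1_pos crit1.
have [mass2 moment2] := crit_system_moments x2_pos crit2.
pose wt a := C2 a * monom a x2.
have wt_ge0 Q : (forall a, a \in Q -> 0 < C2 a) -> forall a, a \in Q -> 0 <= wt a.
  by move=> Q_pos a aQ; rewrite mulr_ge0 ?ltW ?Q_pos ?monom_gt0.
have moment u : \sum_(a <- P) wt a * dotR u (vR a) = \sum_(b <- N) wt b * dotR u (vR b).
  by rewrite !euler_sum_dotR; apply: eq_bigr => i _; rewrite moment2.
have wtN : forall b, b \in N -> 0 <= wt b.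
  by apply: wt_ge0 => b bN; exact: lt_trans (C1N b bN) (C12N b bN).
have := exp_moment_le (wt_ge0 P C2P) wtN mass2 moment cells (lnv x1 - lnv x2).
under eq_bigr => b _ do rewrite /wt -mulrA monom_lnv_shift //.
under [X in _ <= X]eq_bigr => a _ do rewrite /wt -mulrA monom_lnv_shift //.
have -> : \sum_(a <- P) C2 a * monom a x1 = \sum_(b <- N) C1 b * monom b x1.
  by rewrite -mass1; apply: eq_big_seq => a aP; rewrite C12P.
apply/negP; rewrite -ltNge big_seq [ltRHS]big_seq.
apply: ltr_sum; first by case/fset0Pn: N0 => b bN; apply/hasP; exists b.
by move=> b bN; rewrite ltr_pM2r ?monom_gt0 // C12N.
Qed.

End Uniqueness.


Section Existence.
Variables (R : realType) (n : nat) (P N : {fset 'rV[int]_n}) (c : 'rV[int]_n -> R)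
  (hn : 'rV[int]_n -> nat).
Local Open Scope fset_scope.
Local Open Scope ring_scope.
Hypothesis c_gt0P : forall a, a \in P -> 0 < c a.
Hypothesis c_gt0N : forall b, b \in N -> 0 < c b.
Hypothesis hn_gt0 : forall b, b \in N -> (0 < hn b)%N.
Hypothesis N_neq0 : N != fset0.
Hypothesis N_rel_int : forall b, b \in N -> rel_int (@cvx_hull R n P) (vR b).
Implicit Types (a b : 'rV[int]_n) (z : 'rV[R]_n).

Lemma P_neq0 : P != fset0.
Proof.
apply/negP => /eqP P0; case/fset0Pn: N_neq0 => b /N_rel_int [+ _].
by rewrite P0 => /cvx_hull_fset0.
Qed.

Definition expmon a z := expR (dotR (vR a) z).

Definition fpos z := \sum_(a <- P) c a * expmon a z.
Definition ratio b z := c b * expmon b z / fpos z.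
Definition psi (t : R) z := \sum_(b <- N) t ^+ hn b * ratio b z.

Lemma fpos_ge a z : a \in P -> c a * expmon a z <= fpos z.
Proof.
move=> aP; apply: (ler_sum_term (F := fun a => c a * expmon a z)) => // a' a'P.
by rewrite mulr_ge0 ?expR_ge0 ?ltW ?c_gt0P.
Qed.

Lemma fpos_gt0 z : 0 < fpos z.
Proof.
case/fset0Pn: P_neq0 => a aP; apply: lt_le_trans (fpos_ge z aP).
by rewrite mulr_gt0 ?expR_gt0 ?c_gt0P.
Qed.

Lemma ratio_ge0 b z : b \in N -> 0 <= ratio b z.
Proof. by move=> bN; rewrite divr_ge0 ?mulr_ge0 ?expR_ge0 ?ltW ?c_gt0N ?fpos_gt0. Qed.

Lemma psi0 (t : R) : psi t 0 = (\sum_(b <- N) c b * t ^+ hn b) / fpos 0.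
Proof.
rewrite /psi mulr_suml; apply: eq_bigr => b _.
by rewrite /ratio /expmon dotR0r expR0 mulr1 mulrCA mulrA.
Qed.

Lemma signomial_expv_psi (C : 'rV[int]_n -> R) (t : R) z :
  (forall a, a \in P -> C a = c a) -> (forall b, b \in N -> C b = c b * t ^+ hn b) ->
  signomial P N C (expv z) = fpos z * (1 - psi t z).
Proof.
move=> CP CN; rewrite signomial_expv mulrBr mulr1; congr (_ - _).
  by apply: eq_big_seq => a aP; rewrite CP.
rewrite /psi mulr_sumr; apply: eq_big_seq => b bN.
by rewrite CN // /ratio /expmon; field; rewrite gt_eqF ?fpos_gt0.
Qed.

Definition cmin := (\sum_(a <- P) (c a)^-1)^-1.

Lemma cmin_gt0 : 0 < cmin.
Proof.
case/fset0Pn: P_neq0 => a aP; rewrite invr_gt0.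
apply: lt_le_trans (ler_sum_term (F := fun a => (c a)^-1) _ aP).
  by rewrite invr_gt0 c_gt0P.
by move=> a' a'P; rewrite invr_ge0 ltW ?c_gt0P.
Qed.

Lemma cmin_le a : a \in P -> cmin <= c a.
Proof.
move=> aP; have := cmin_gt0; rewrite /cmin invr_gt0 => sum_gt0.
rewrite -[X in _ <= X](invrK (c a)) lef_pV2 ?posrE ?invr_gt0 ?c_gt0P //.
apply: (ler_sum_term (F := fun a => (c a)^-1)) => // a' a'P.
by rewrite invr_ge0 ltW ?c_gt0P.
Qed.

Lemma fpos_ge_cmin a z : a \in P -> cmin * expmon a z <= fpos z.
Proof.
by move=> aP; apply: le_trans (fpos_ge z aP); rewrite ler_pM2r ?expR_gt0 ?cmin_le.
Qed.

Lemma cmin_le_fpos0 : cmin <= fpos 0.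
Proof.
case/fset0Pn: P_neq0 => a aP; apply: le_trans (fpos_ge_cmin 0 aP).
by rewrite /expmon dotR0r expR0 mulr1.
Qed.

Lemma ratio_le b z : b \in N -> ratio b z <= c b / cmin.
Proof.
move=> bN; have [amax amaxP amax_ge] := fset_argmax (fun a => dotR (vR a) z) P_neq0.
have b_le : expmon b z <= expmon amax z.
  rewrite ler_expR -dotRC; apply: cvx_hull_dotR_le amax_ge.
  by case: (N_rel_int bN).
rewrite /ratio ler_pdivrMr ?fpos_gt0 // -[X in _ <= X]mulrA.
apply: le_trans (_ : c b * expmon amax z <= _); first by rewrite ler_pM2l ?c_gt0N.
by rewrite ler_pM2l ?c_gt0N // ler_pdivlMl ?cmin_gt0 // fpos_ge_cmin.
Qed.

Definition margin (eps : R) := forall b, b \in N -> forall z a1 a2 (M : R),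
  a1 \in P -> a2 \in P -> dotR (vR a2) z <= dotR (vR a1) z ->
  (forall a, a \in P -> dotR (vR a) z <= M) ->
  dotR (vR b) z + eps * (dotR (vR a1) z - dotR (vR a2) z) <= M.

Lemma margin_exists : exists2 eps, 0 < eps & margin eps.
Proof.
apply: seq_uniform_pos => [b e e' e'_gt0 e'_le Qe z a1 a2 M a1P a2P a21 zM |b bN].
  apply: le_trans (Qe z a1 a2 M a1P a2P a21 zM); rewrite lerD2l.
  by rewrite ler_wpM2r // subr_ge0.
have [eps eps_gt0 eps_margin] := rel_int_margin (N_rel_int bN).
by exists eps => // z a1 a2 M a1P a2P _; exact: eps_margin.
Qed.

Section Margin.
Variable eps : R.
Hypotheses (eps_gt0 : 0 < eps) (eps_margin : margin eps).

Lemma ratio_le_spread b z a1 a2 : b \in N -> a1 \in P -> a2 \in P ->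
  dotR (vR a2) z <= dotR (vR a1) z ->
  ratio b z <= c b / cmin * expR (- (eps * (dotR (vR a1) z - dotR (vR a2) z))).
Proof.
move=> bN a1P a2P a21.
have [amax amaxP amax_ge] := fset_argmax (fun a => dotR (vR a) z) P_neq0.
have := eps_margin bN a1P a2P a21 amax_ge; set D := dotR _ _ - _ => b_le.
rewrite /ratio ler_pdivrMr ?fpos_gt0 //.
apply: le_trans (_ : c b * (expmon amax z * expR (- (eps * D))) <= _).
  by rewrite ler_pM2l ?c_gt0N // /expmon -expRD ler_expR; lra.
have -> : c b * (expmon amax z * expR (- (eps * D))) =
    c b / cmin * expR (- (eps * D)) * (cmin * expmon amax z).
  by field; rewrite gt_eqF ?cmin_gt0.
by rewrite ler_pM2l ?fpos_ge_cmin // mulr_gt0 ?expR_gt0 // divr_gt0 ?c_gt0N ?cmin_gt0.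
Qed.

(* If [z] does as well as [0], the ratios at [z] cannot all be damped by the
   spread of [<a, z>] over [P], so that spread is bounded independently of [t]. *)
Lemma spread_le (t : R) z a1 a2 : 0 < t -> psi t 0 <= psi t z -> a1 \in P -> a2 \in P ->
  dotR (vR a1) z - dotR (vR a2) z <= ln (fpos 0 / cmin) / eps.
Proof.
move=> t_gt0 psi_ge a1P a2P; set D := dotR _ _ - _.
have K_ge0 : 0 <= ln (fpos 0 / cmin) / eps.
  apply: divr_ge0 (ltW eps_gt0); apply: ln_ge0.
  by rewrite ler_pdivlMr ?cmin_gt0 // mul1r cmin_le_fpos0.
have [D_le0 | D_gt0] := leP D 0; first exact: le_trans D_le0 K_ge0.
pose Q := \sum_(b <- N) c b * t ^+ hn b.
have Q_gt0 : 0 < Q.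
  case/fset0Pn: N_neq0 => b bN; apply: lt_le_trans (ler_sum_term _ bN).
    by rewrite mulr_gt0 ?c_gt0N ?exprn_gt0.
  by move=> b' b'N; rewrite mulr_ge0 ?exprn_ge0 ?ltW ?c_gt0N.
have psi_le : psi t z <= Q / cmin * expR (- (eps * D)).
  rewrite /Q mulr_suml mulr_suml /psi big_seq [X in _ <= X]big_seq.
  apply: ler_sum => b bN.
  apply: le_trans (_ : t ^+ hn b * (c b / cmin * expR (- (eps * D))) <= _).
    apply: ler_wpM2l; first by rewrite exprn_ge0 // ltW.
    by apply: ratio_le_spread => //; rewrite -subr_ge0 ltW.
  by rewrite !mulrA [t ^+ _ * c b]mulrC.
have : cmin / fpos 0 <= expR (- (eps * D)).
  have := le_trans psi_ge psi_le; rewrite psi0 -/Q => Q_le.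
  have -> : cmin / fpos 0 = Q / fpos 0 * (cmin / Q).
    by field; rewrite !gt_eqF ?fpos_gt0.
  have -> : expR (- (eps * D)) = Q / cmin * expR (- (eps * D)) * (cmin / Q).
    by field; rewrite !gt_eqF ?cmin_gt0.
  by rewrite ler_wpM2r // divr_ge0 ?ltW ?cmin_gt0.
rewrite -[cmin / fpos 0]lnK ?posrE ?divr_gt0 ?cmin_gt0 ?fpos_gt0 // ler_expR.
rewrite -invf_div lnV ?posrE ?divr_gt0 ?cmin_gt0 ?fpos_gt0 // lerN2.
by rewrite ler_pdivlMr // mulrC.
Qed.

End Margin.

Lemma psi_translate (t : R) z z' (d : R) :
  (forall a, a \in P -> dotR (vR a) z' = dotR (vR a) z + d) -> psi t z' = psi t z.
Proof.
move=> zz'; have expmonE a : dotR (vR a) z' = dotR (vR a) z + d ->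
    expmon a z' = expmon a z * expR d by move=> e; rewrite /expmon e expRD.
have fposE : fpos z' = fpos z * expR d.
  by rewrite /fpos mulr_suml; apply: eq_big_seq => a aP; rewrite expmonE ?zz' ?mulrA.
apply: eq_big_seq => b bN; congr (_ * _); rewrite /ratio fposE expmonE.
  by field; rewrite !gt_eqF ?fpos_gt0 ?expR_gt0.
have [l [_ l_sum1] lin] := cvx_hull_dotR (N_rel_int bN).1.
rewrite !(dotRC (vR b)) !lin -[d]mul1r -l_sum1 mulr_suml -big_split /=.
by apply: eq_big_seq => a aP; rewrite !(dotRC _ (vR a)) zz' // mulrDr.
Qed.

Definition box (B : R) : set 'rV[R]_n := [set z | forall j, `[- B, B]%classic (z 0 j)].

Lemma boxP (B : R) z : box B z <-> forall j, `|z 0 j| <= B.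
Proof. by split=> zB j; have := zB j; rewrite /= in_itv /= ler_norml. Qed.

Lemma psi_bounded_max : exists2 B : R, 0 <= B & forall (t : R) z, 0 < t ->
  exists2 z', box B z' & psi t z <= psi t z'.
Proof.
have [eps eps_gt0 eps_margin] := margin_exists.
set K := ln (fpos 0 / cmin) / eps.
case/fset0Pn: P_neq0 => a0 a0P.
have spread := spread_le eps_gt0 eps_margin.
have K_ge0 : 0 <= K by have := spread 1 0 a0 a0 ltr01 (lexx _) a0P a0P; rewrite subrr.
have [B B_ge0 B_repr] := bounded_representative a0P K_ge0.
exists B => // t z t_gt0.
have [psi_lt | psi_ge] := ltP (psi t z) (psi t 0).
  by exists 0 => [|]; [apply/boxP => j; rewrite mxE normr0 | exact: ltW].
have [z' z'B z'diff] : exists2 z' : 'rV[R]_n, (forall j, `|z' 0 j| <= B) &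
    forall a, a \in P -> dotR (vR a) z' - dotR (vR a0) z' = dotR (vR a) z - dotR (vR a0) z.
  apply: B_repr => a aP; rewrite ler_norml; apply/andP; split.
    by rewrite lerNl opprB (spread t).
  exact: (spread t).
exists z'; first exact/boxP.
rewrite (@psi_translate t z z' (dotR (vR a0) z' - dotR (vR a0) z)) //.
by move=> a aP; have := z'diff a aP; lra.
Qed.

Lemma expmon_continuous a : continuous (expmon a).
Proof.
move=> z; apply: continuous_comp; last exact: continuous_expR.
apply: sum_continuous => i w.
apply: (@continuousM _ _ (fun=> vR a 0 i) (fun z : 'rV[R]_n => z 0 i)).
  exact: cst_continuous.
exact: coord_continuous.
Qed.

Lemma fpos_continuous : continuous fpos.
Proof.
apply: sum_continuous => a z.
apply: (@continuousM _ _ (fun=> c a) (expmon a)); first exact: cst_continuous.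
exact: expmon_continuous.
Qed.

Lemma psi_continuous (t : R) : continuous (psi t).
Proof.
apply: sum_continuous => b z.
apply: (@continuousM _ _ (fun=> t ^+ hn b) (ratio b)); first exact: cst_continuous.
apply: (@continuousM _ _ (fun z => c b * expmon b z) (fun z => (fpos z)^-1)).
  apply: (@continuousM _ _ (fun=> c b) (expmon b)); first exact: cst_continuous.
  exact: expmon_continuous.
by apply: (@continuousV _ _ fpos); [rewrite gt_eqF ?fpos_gt0 | exact: fpos_continuous].
Qed.

Section MaxValue.
Variables (B : R) (zmax : R -> 'rV[R]_n).
Hypothesis B_ge0 : 0 <= B.
Hypothesis psi_box : forall (t : R) z, 0 < t -> exists2 z', box B z' & psi t z <= psi t z'.
Hypothesis zmax_box : forall t, box B (zmax t).
Hypothesis zmax_max : forall t z, box B z -> psi t z <= psi t (zmax t).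

Definition psimax t := psi t (zmax t).

Lemma psimax_ub (t : R) z : 0 < t -> psi t z <= psimax t.
Proof.
move=> t_gt0; have [z' z'B z'_ge] := psi_box z t_gt0.
exact: le_trans z'_ge (zmax_max t z'B).
Qed.

Lemma psi0_le_psimax (t : R) : psi t 0 <= psimax t.
Proof. by apply: zmax_max; apply/boxP => j; rewrite mxE normr0. Qed.

Definition modulus (t s : R) := \sum_(b <- N) c b / cmin * `|s ^+ hn b - t ^+ hn b|.

Lemma psi_dist (s t : R) z : `|psi s z - psi t z| <= modulus t s.
Proof.
rewrite /psi /modulus -sumrB; apply: le_trans (ler_norm_sum _ _ _) _.
rewrite big_seq [X in _ <= X]big_seq; apply: ler_sum => b bN.
rewrite -mulrBl normrM mulrC ler_wpM2r ?normr_ge0 //.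
by rewrite ger0_norm ?ratio_ge0 ?ratio_le.
Qed.

Lemma modulus_continuous t : continuous (modulus t).
Proof.
apply: sum_continuous => b s.
have pow_cont : {for s, continuous (fun s : R => s ^+ hn b - t ^+ hn b)}.
  exact: continuousB (@exprn_continuous R (hn b) s) (@cst_continuous R R _ s).
exact: continuousM (@cst_continuous R R _ s)
  (continuous_comp pow_cont (@norm_continuous _ R _)).
Qed.

Lemma modulus_id t : modulus t t = 0.
Proof. by rewrite /modulus big1 // => b _; rewrite subrr normr0 mulr0. Qed.

(* Both maxima are taken over the same box, so they are [modulus t s]-close. *)
Lemma psimax_continuous : continuous psimax.
Proof.
move=> t.
have lower : (fun s => psimax t - modulus t s) @ t --> psimax t.
  have := continuousB (@cst_continuous R R (psimax t) t) (@modulus_continuous t t).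
  move/cvg_trans; apply.
  by rewrite -[_ t]/(psimax t - modulus t t) modulus_id subr0; exact: cvg_refl.
have upper : (fun s => psimax t + modulus t s) @ t --> psimax t.
  have := continuousD (@cst_continuous R R (psimax t) t) (@modulus_continuous t t).
  move/cvg_trans; apply.
  by rewrite -[_ t]/(psimax t + modulus t t) modulus_id addr0; exact: cvg_refl.
apply: (squeeze_cvgr _ lower upper); near=> s.
have := psi_dist s t (zmax t); have := psi_dist s t (zmax s).
have := zmax_max s (zmax_box t); have := zmax_max t (zmax_box s).
rewrite /psimax !ler_norml => h1 h2 /andP[_ h3] /andP[h4 _]; apply/andP; split; lra.
Unshelve. all: by end_near.
Qed.

Lemma psimax_le (t : R) : 0 <= t -> psimax t <= \sum_(b <- N) c b / cmin * t ^+ hn b.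
Proof.
move=> t_ge0; rewrite /psimax /psi big_seq [X in _ <= X]big_seq.
by apply: ler_sum => b bN; rewrite mulrC ler_wpM2r ?exprn_ge0 ?ratio_le.
Qed.

Lemma psimax_root : exists2 t0, 0 < t0 & psimax t0 = 1.
Proof.
pose Cq := \sum_(b <- N) c b / cmin.
have Cq_ge0 : 0 <= Cq.
  by rewrite /Cq big_seq sumr_ge0 // => b bN; rewrite divr_ge0 ?ltW ?c_gt0N ?cmin_gt0.
(* [t1] pushes the bound [Cq * t1] below 1, while at [t2] the single term
   [c b0 * t2] of [psi t2 0] already exceeds [fpos 0]. *)
pose t1 := (1 + 2 * Cq)^-1.
have t1_gt0 : 0 < t1 by rewrite invr_gt0; lra.
have t1_le1 : t1 <= 1 by rewrite invf_le1; lra.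
have psimax_t1 : psimax t1 < 1.
  apply: le_lt_trans (psimax_le (ltW t1_gt0)) _.
  apply: (@le_lt_trans _ _ (Cq * t1)).
    rewrite /Cq mulr_suml big_seq [X in _ <= X]big_seq; apply: ler_sum => b bN.
    apply: ler_wpM2l; first by rewrite divr_ge0 ?ltW ?c_gt0N ?cmin_gt0.
    by rewrite -[X in _ <= X]expr1; exact: (ler_wiXn2l (ltW t1_gt0) t1_le1 (hn_gt0 bN)).
  by rewrite ltr_pdivrMr ?mul1r; lra.
case/fset0Pn: N_neq0 => b0 b0N.
pose t2 := 1 + fpos 0 / c b0.
have t2_ge1 : 1 <= t2 by rewrite lerDl divr_ge0 ?ltW ?fpos_gt0 ?c_gt0N.
have psimax_t2 : 1 < psimax t2.
  apply: lt_le_trans (psi0_le_psimax t2); rewrite psi0 ltr_pdivlMr ?fpos_gt0 // mul1r.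
  apply: (@lt_le_trans _ _ (c b0 * t2)).
    by rewrite mulrDr mulr1 mulrCA divff ?mulr1 ?gt_eqF ?c_gt0N // ltrDr c_gt0N.
  apply: le_trans (_ : c b0 * t2 ^+ hn b0 <= _).
    by rewrite ler_pM2l ?c_gt0N // -[X in X <= _]expr1 ler_weXn2l ?hn_gt0.
  apply: (ler_sum_term (F := fun b => c b * t2 ^+ hn b)) => // b bN.
  by rewrite mulr_ge0 ?exprn_ge0 ?ltW ?c_gt0N //; lra.
have t12 : t1 <= t2 by lra.
have psimax_cont := @continuous_subspaceT _ _ `[t1, t2] psimax psimax_continuous.
have [t0 t0_in psimax_t0] : exists2 t0, t0 \in `[t1, t2] & psimax t0 = 1.
  by apply: (IVT t12 psimax_cont); rewrite ge_min le_max (ltW psimax_t1) (ltW psimax_t2) orbT.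
by exists t0 => //; move: t0_in; rewrite in_itv /= => /andP[/(lt_le_trans t1_gt0)].
Qed.

Lemma psimax_crit_zero (C : R -> 'rV[int]_n -> R) :
  (forall t a, a \in P -> C t a = c a) -> (forall t b, b \in N -> C t b = c b * t ^+ hn b) ->
  exists t, 0 < t /\ exists x, posvec x /\ crit_system P N (C t) x = (fun _ => 0).
Proof.
move=> CP CN; have [t0 t0_gt0 psimax_t0] := psimax_root.
have sigE z := signomial_expv_psi z (CP t0) (CN t0).
exists t0; split => //; exists (expv (zmax t0)); split; first exact: expv_pos.
apply: crit_system_at_zero_min; first exact: expv_pos.
  by rewrite sigE -/(psimax t0) psimax_t0 subrr mulr0.
move=> y y_pos; rewrite -(lnvK y_pos) sigE mulr_ge0 //; first exact: ltW (fpos_gt0 _).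
by rewrite subr_ge0 -psimax_t0 psimax_ub.
Qed.

End MaxValue.

Lemma exists_crit_zero (C : R -> 'rV[int]_n -> R) :
  (forall t a, a \in P -> C t a = c a) -> (forall t b, b \in N -> C t b = c b * t ^+ hn b) ->
  exists t, 0 < t /\ exists x, posvec x /\ crit_system P N (C t) x = (fun _ => 0).
Proof.
have [B B_ge0 psi_box] := psi_bounded_max.
have box_compact : compact (box B).
  by apply: (@rV_compact _ n (fun=> `[- B, B]%classic)) => j; exact: segment_compact.
have box0 : box B 0 by apply/boxP => j; rewrite mxE normr0.
have [zmax zmaxP] : {zmax : R -> 'rV[R]_n & forall t,
    box B (zmax t) /\ forall z, box B z -> psi t z <= psi t (zmax t)}.
  apply: (@choice _ _ (fun t z => box B z /\ forall z', box B z' -> psi t z' <= psi t z)) => t.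
  have [z zB z_max] := EVT_max_rV (ex_intro _ 0 box0) box_compact
    (continuous_subspaceT (@psi_continuous t)).
  by exists z; split=> [|z' z'B]; [rewrite -in_setE | apply: z_max; rewrite in_setE].
exact: (psimax_crit_zero B_ge0 psi_box (fun t => (zmaxP t).1) (fun t => (zmaxP t).2)).
Qed.

End Existence.

Section CriticalParameter.
Variables (R : realType) (n : nat) (P N : {fset 'rV[int]_n}) (c : 'rV[int]_n -> R)
  (hn : 'rV[int]_n -> nat) (C : R -> 'rV[int]_n -> R).
Hypotheses (c_gt0P : forall a, a \in P -> 0 < c a) (c_gt0N : forall b, b \in N -> 0 < c b).
Hypotheses (hn_gt0 : forall b, b \in N -> (0 < hn b)%N) (N_neq0 : N != fset0).
Hypothesis PN_nonsep : nonseparable R P N.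
Hypotheses (CP : forall t a, a \in P -> C t a = c a)
           (CN : forall t b, b \in N -> C t b = c b * t ^+ hn b).

Lemma crit_parameter_lt (t1 t2 : R) x1 x2 : 0 < t1 -> t1 < t2 ->
  posvec x1 -> crit_system P N (C t1) x1 = (fun _ => 0) ->
  posvec x2 -> crit_system P N (C t2) x2 = (fun _ => 0) -> False.
Proof.
move=> t1_gt0 t12; apply: crit_zeros_coef_lt N_neq0 _ _ _ _ _.
- by move=> a aP; rewrite CP ?c_gt0P.
- by move=> b bN; rewrite CN // mulr_gt0 ?c_gt0N ?exprn_gt0.
- by move=> a aP; rewrite !CP.
- move=> b bN; rewrite !CN // ltr_pM2l ?c_gt0N // ltrXn2r ?ltW //.
  by rewrite -lt0n hn_gt0.
- exact: nonseparable_lower_cells.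
Qed.

Lemma crit_parameter_unique : exists t0 : R,
  [set t : R | 0 < t /\ exists x : 'rV[R]_n, posvec x /\
     crit_system P N (C t) x = (fun _ => 0)] = [set t0].
Proof.
have [t0 [t0_gt0 [x0 [x0_pos crit0]]]] :=
  exists_crit_zero c_gt0P c_gt0N hn_gt0 N_neq0 PN_nonsep.1 CP CN.
exists t0; apply/seteqP; split=> [t [t_gt0 [x [x_pos crit]]] | _ ->]; last first.
  by split=> //; exists x0.
case: (ltgtP t t0) => // [tt0 | t0t]; exfalso.
  exact: crit_parameter_lt t_gt0 tt0 x_pos crit x0_pos crit0.
exact: crit_parameter_lt t0_gt0 t0t x0_pos crit0 x_pos crit.
Qed.

End CriticalParameter.

Lemma in_restr_supp (R : realType) (n : nat) (A : {fset 'rV[int]_n}) (G : set 'rV[R]_n) a :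
  (a \in restr_supp A G) = (a \in A) && `[< G (vR a) >].
Proof. by rewrite !inE. Qed.

Unset Implicit Arguments.

Theorem theorem3p16 (R : realType) (n : nat) (Ap Am : {fset 'rV[int]_n})
  (G : set 'rV[R]_n) (c : 'rV[int]_n -> R) (h : 'rV[int]_n -> int) :
  Ap != fset0 -> Am != fset0 -> (forall a, a \in Ap -> a \notin Am) ->
  is_face_of (cvx_hull Ap) G ->
  (forall b, b \in Am -> rel_int G (vR b)) ->
  nonseparable R (restr_supp Ap G) (restr_supp Am G) ->
  (forall a, a \in (fsetU Ap Am) -> 0 < c a) ->
  lifts_neg Ap Am h ->
  exists t0 : R,
    [set t : R | 0 < t /\ exists x : 'rV[R]_n, posvec x /\
       crit_system (restr_supp Ap G) (restr_supp Am G)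
         (coef_proj (restr_supp (fsetU Ap Am) G) (coef_star c t h)) x = (fun _ => 0)]
    = [set t0].
Proof.
(* The face [G] enters only through the nonseparability of the restricted
   supports. *)
move=> _ Am_neq0 _ _ Am_G nonsep c_gt0 [h_gt0 h0].
have inU a : a \in Ap \/ a \in Am -> G (vR a) -> a \in restr_supp (fsetU Ap Am) G.
  move=> aApm /asboolP Ga; rewrite in_restr_supp inE Ga andbT.
  by case: aApm => ->; rewrite ?orbT.
apply: (@crit_parameter_unique R n _ _ c (fun b => `|h b|%N)) => [a|b|b|||t a|t b].
- by rewrite in_restr_supp => /andP[aAp _]; rewrite c_gt0 // inE aAp.
- by rewrite in_restr_supp => /andP[bAm _]; rewrite c_gt0 // inE bAm orbT.
- by rewrite in_restr_supp absz_gt0 => /andP[/h_gt0 /lt0r_neq0].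
- case/fset0Pn: Am_neq0 => b bAm; apply/fset0Pn; exists b.
  by rewrite in_restr_supp bAm asboolT //; case: (Am_G b bAm).
- exact: nonsep.
- rewrite in_restr_supp => /andP[aAp /asboolP Ga].
  by rewrite /coef_proj inU; [rewrite /coef_star h0 // expr0z mulr1 | left | ].
- rewrite in_restr_supp => /andP[bAm /asboolP Gb].
  rewrite /coef_proj inU; [ | by right | by []].
  by rewrite /coef_star -[in LHS](gez0_abs (ltW (h_gt0 b bAm))).
Qed.
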